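(* Let $G$ be a trivalent graph embedded in the $2$-sphere with a perfect matching $M$ such that $G(V,E\setminus M)$ is a single cycle $C$. For a face $F$ of the embedding, let $m(F)$ be the number of edges of $M$ on the boundary of $F$ and $\ell(F)$ the number of vertices on the boundary of $F$ whose matching edge does not lie on the boundary of $F$. Then $G$ has a face $F$ with $$(m(F),\ell(F))\in\{(1,0),(1,1),(1,2),(2,0),(2,1),(3,0)\}.$$ Explicitly, $G$ contains one of the following local configurations: a digon bounded by one matching edge and one non-matching edge; a triangle bounded by one matching edge and two non-matching edges; a quadrilateral bounded by one matching edge and a path of three non-matching edges; a quadrilateral bounded alternately by two matching and two non-matching edges; a pentagon bounded by two non-adjacent matching edges and three non-matching edges; or a hexagon bounded alternately by three matching and three non-matching edges.
   Context: Graphs are finite and may have multiple edges; trivalent means every vertex has degree $3$. $G(V,E\setminus M)$ denotes the graph with all vertices of $G$ and all edges of $G$ not in $M$. *)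

(* Sphere-embedded graphs are encoded as combinatorial maps
   (rotation systems) on a finite type of darts (half-edges). *)
From mathcomp Require Import all_boot.
Set Implicit Arguments. Unset Strict Implicit. Unset Printing Implicit Defensive.

Section CombMap.
Variables (D : finType) (alpha sigma : D -> D).

(* alpha : fixed-point-free involution (the two darts of an edge);
   sigma : rotation around vertices (a permutation); vertices = sigma-orbits. *)
Definition is_comb_map : Prop :=
  [/\ forall x, alpha (alpha x) = x, forall x, alpha x != x & injective sigma].

Definition phi (x : D) : D := sigma (alpha x).

Definition map_connected : Prop :=
  forall x y, connect [rel u v | (v == alpha u) || (v == sigma u)] x y.

(* Euler's formula V - E + F = 2: together with connectedness, this says
   the rotation system is a cellular embedding in the 2-sphere *)
Definition genus0 : Prop :=
  (fcard sigma D + fcard phi D = fcard alpha D + 2)%N.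

Definition trivalent : Prop := forall x, order sigma x = 3.

Definition vtx (x : D) : {set D} := [set z | fconnect sigma x z].
Definition edg (x : D) : {set D} := [set x; alpha x].

Variable M : pred D. (* darts belonging to matching edges *)

Definition perfect_matching : Prop :=
  (forall x, M (alpha x) = M x) /\
  (forall x, #|[pred z | fconnect sigma x z & M z]| = 1).

(* G(V, E \ M) is a single cycle: it is 2-regular (automatic from
   trivalence and perfect_matching) and connected. *)
Definition complement_single_cycle : Prop :=
  forall x y,
    connect [rel u v | (v == sigma u) || (~~ M u && (v == alpha u))] x y.

Definition face (x : D) : {set D} := [set y | fconnect phi x y].

Definition face_medges (x : D) : {set {set D}} :=
  [set edg y | y in face x & M y].
Definition face_edges (x : D) : {set {set D}} :=
  [set edg y | y in face x].

Definition mF (x : D) : nat := #|face_medges x|.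

Definition lF (x : D) : nat :=
  #|[set vtx y | y in face x &
       [forall z, (fconnect sigma y z && M z) ==> (edg z \notin face_edges x)]]|.

End CombMap.

From Pilot Require Import Defs.
From mathcomp Require Import all_boot zify.
Set Implicit Arguments. Unset Strict Implicit. Unset Printing Implicit Defensive.

(* For a face, count its darts lying on a matching edge and its darts whose
   successor around their vertex is a matching dart: these bound m and l from
   above, and summed over all faces each count equals the number V of vertices.
   If no face had m >= 1 and m + l <= 3, every face would contribute at least 4
   to this total 2V, except faces with m = 0.  Such a face runs along the
   Hamiltonian cycle C, so it visits every vertex, using there the dart just
   before the matching dart; hence there is at most one of them.  This gives
   4 (F - 1) <= 2 V, against F = V / 2 + 2 from Euler's formula for cubic maps. *)
Lemma fcardT (T : finType) (f : T -> T) : fcard f T = #|froots f|.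
Proof. by apply: eq_card => x; rewrite !inE andbT. Qed.

Lemma card_by_froots (T : finType) (f : T -> T) (P : pred T) : injective f ->
  #|P| = \sum_(r in froots f) #|[pred x | fconnect f r x & P x]|.
Proof.
move=> f_inj; have f_sym := fconnect_sym f_inj.
rewrite -sum1_card (partition_big (froot f) (froots f)) => [|x _]; last first.
  exact: roots_root.
apply: eq_bigr => r /eqP rr; rewrite -sum1_card; apply: eq_bigl => x.
by rewrite -{1}rr root_connect // f_sym andbC.
Qed.

Lemma connect_stable (T : finType) (e : rel T) (P : pred T) x y :
  (forall u v, e u v -> P u -> P v) -> connect e x y -> P x -> P y.
Proof.
move=> eP /connectP[p + ->]; elim: p x => //= v p IHp u /andP[e_uv e_p] Pu.
exact: IHp e_p (eP u v e_uv Pu).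
Qed.

Section TrivalentMatchedMap.
Variables (D : finType) (alpha sigma : D -> D) (M : pred D).
Hypotheses (alphaK : involutive alpha) (sigma_inj : injective sigma).
Hypothesis sigma_order3 : trivalent sigma.
Hypothesis M_alpha : forall x, M (alpha x) = M x.
Hypothesis M_vertex : forall x, #|[pred z | fconnect sigma x z & M z]| = 1.

Local Notation phi := (phi alpha sigma).

Lemma phi_inj : injective phi.
Proof. by move=> x y /sigma_inj /(can_inj alphaK). Qed.

Lemma sigma3K x : sigma (sigma (sigma x)) = x.
Proof. by have := iter_order sigma_inj x; rewrite sigma_order3. Qed.

Lemma fconnect_sigma x y : fconnect sigma x y ->
  [\/ y = x, y = sigma x | y = sigma (sigma x)].
Proof.
move=> xy; rewrite -(iter_findex xy); have := findex_max xy.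
rewrite sigma_order3; case: (findex sigma x y) => [|[|[|n]]] //= _.
- exact: Or31.
- exact: Or32.
- exact: Or33.
Qed.

Lemma matching_dart_unique x y : fconnect sigma x y -> M x -> M y -> x = y.
Proof.
move=> xy Mx My; have /card_le1_eqP : #|[pred z | fconnect sigma x z & M z]| <= 1.
  by rewrite M_vertex.
by apply; rewrite inE /= ?connect0 ?Mx ?xy ?My.
Qed.

Lemma matching_dart_exists x : [\/ M x, M (sigma x) | M (sigma (sigma x))].
Proof.
have /card_gt0P[z /andP[xz Mz]] : 0 < #|[pred z | fconnect sigma x z & M z]|.
  by rewrite M_vertex.
by case: (fconnect_sigma xz) Mz => ->; [apply: Or31 | apply: Or32 | apply: Or33].
Qed.

Lemma phi_alpha_sigma2 y : phi (alpha (sigma (sigma y))) = y.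
Proof. by rewrite /Defs.phi alphaK sigma3K. Qed.

Lemma face_alpha_sigma2 r y :
  fconnect phi r y -> fconnect phi r (alpha (sigma (sigma y))).
Proof.
move=> ry; apply: connect_trans ry _.
by rewrite (fconnect_sym phi_inj) -{2}(phi_alpha_sigma2 y) fconnect1.
Qed.

Definition face_mdarts r := #|[pred y | fconnect phi r y & M y]|.
Definition face_ldarts r := #|[pred y | fconnect phi r y & M (sigma y)]|.

Lemma mF_gt0 r : 0 < face_mdarts r -> 0 < mF alpha sigma M r.
Proof.
case/card_gt0P=> y /andP[ry My]; apply/card_gt0P; exists (edg alpha y).
by apply: imset_f; rewrite !inE ry My.
Qed.

Lemma mF_le r : mF alpha sigma M r <= face_mdarts r.
Proof.
apply: leq_trans (leq_imset_card _ _) _.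
by apply: subset_leq_card; apply/subsetP => y; rewrite !inE.
Qed.

Lemma lF_le r : lF alpha sigma M r <= face_ldarts r.
Proof.
apply: leq_trans (leq_imset_card _ _) _; apply: subset_leq_card.
apply/subsetP => y; rewrite !inE => /andP[ry /forallP off_face]; rewrite ry /=.
case: (matching_dart_exists y) => // [My | Ms2y].
  move: (off_face y); rewrite connect0 My /= => /negP[].
  by apply: imset_f; rewrite inE.
move: (off_face (sigma (sigma y))).
rewrite Ms2y (fconnect_iter sigma 2 y) /= => /negP[].
have -> : edg alpha (sigma (sigma y)) = edg alpha (alpha (sigma (sigma y))).
  by rewrite /edg alphaK setUC.
by apply: imset_f; rewrite inE face_alpha_sigma2.
Qed.

Lemma sum_face_darts :
  \sum_(r in froots phi) (face_mdarts r + face_ldarts r) = 2 * fcard sigma D.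
Proof.
have card_M : #|M| = fcard sigma D.
  by rewrite fcardT (card_by_froots M sigma_inj) -sum1_card; apply: eq_bigr.
have card_Msigma : #|[preim sigma of M]| = #|M|.
  by rewrite (card_preim sigma_inj); apply: eq_card => x; rewrite !inE injF_onto.
rewrite big_split /= -!(card_by_froots _ phi_inj) -card_M mul2n -addnn.
by congr (_ + _); rewrite -card_Msigma.
Qed.

Lemma face_mdarts_eq0 r z : face_mdarts r = 0 -> fconnect phi r z -> ~~ M z.
Proof.
move=> r0 rz; apply/negP => Mz; suff : 0 < face_mdarts r by rewrite r0.
by apply/card_gt0P; exists z; rewrite inE /= rz Mz.
Qed.

Lemma matching_free_sigma r y :
  face_mdarts r = 0 -> fconnect phi r y -> M (sigma y).
Proof.
move=> r0 ry; case: (matching_dart_exists y) => // [My | Ms2y].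
  by move: (face_mdarts_eq0 r0 ry); rewrite My.
by move: (face_mdarts_eq0 r0 (face_alpha_sigma2 ry)); rewrite M_alpha Ms2y.
Qed.

Hypothesis cycle_connect : complement_single_cycle alpha sigma M.

(* A face without matching darts follows C: crossing a non-matching edge from
   one of its vertices leads along the face to the next vertex. *)
Lemma matching_free_face_cover r y :
  face_mdarts r = 0 -> exists2 s, fconnect phi r s & fconnect sigma s y.
Proof.
move=> r0.
pose near := [pred u | [exists s, fconnect phi r s && fconnect sigma s u]].
suff /existsP[s /andP[rs sy]] : near y by exists s.
apply: connect_stable (cycle_connect r y) _; last first.
  by apply/existsP; exists r; rewrite !connect0.
move=> u v /orP[/eqP-> | /andP[nMu /eqP->]] /existsP[s /andP[rs su]]; apply/existsP.
  by exists s; rewrite rs (connect_trans su (fconnect1 _ _)).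
case: (fconnect_sigma su) nMu => -> nMu.
- exists (phi s); rewrite (connect_trans rs (fconnect1 _ _)) /=.
  by rewrite (fconnect_sym sigma_inj) fconnect1.
- by rewrite (matching_free_sigma r0 rs) in nMu.
- by exists (alpha (sigma (sigma s))); rewrite face_alpha_sigma2 ?connect0.
Qed.

Lemma matching_free_face_unique r1 r2 :
  face_mdarts r1 = 0 -> face_mdarts r2 = 0 -> fconnect phi r1 r2.
Proof.
move=> r1_0 r2_0; have [s r1s sr2] := matching_free_face_cover r2 r1_0.
suff <- : s = r2 by [].
apply: sigma_inj; apply: matching_dart_unique (matching_free_sigma r1_0 r1s)
  (matching_free_sigma r2_0 (connect0 _ _)).
apply: connect_trans (fconnect1 _ r2); apply: connect_trans sr2.
by rewrite (fconnect_sym sigma_inj) fconnect1.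
Qed.

Lemma card_matching_free_faces :
  #|[pred r in froots phi | face_mdarts r == 0]| <= 1.
Proof.
apply/card_le1_eqP => r1 r2; rewrite !inE.
move=> /andP[/eqP root1 /eqP r1_0] /andP[/eqP root2 /eqP r2_0].
rewrite -root1 -root2; apply/(rootP (fconnect_sym phi_inj)).
exact: matching_free_face_unique.
Qed.

Hypothesis alpha_fpf : forall x, alpha x != x.
Hypothesis genus : genus0 alpha sigma.

Lemma euler_trivalent : 2 * fcard phi D = fcard sigma D + 4.
Proof.
have V3 : fcard sigma D * 3 = #|D|.
  apply: fcard_order_set => //; apply/subsetP => x _.
  by rewrite inE sigma_order3.
have E2 : fcard alpha D * 2 = #|D|.
  apply: (fcard_order_set (can_inj alphaK)) => //.
  apply/subsetP => x _; rewrite inE; apply/eqP.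
  have cyc : fcycle alpha [:: x; alpha x] by rewrite /= alphaK !eqxx.
  by rewrite (order_cycle cyc) ?mem_head //= inE eq_sym alpha_fpf.
move: genus; rewrite /genus0; lia.
Qed.

Lemma small_face_exists :
  exists2 r, 0 < face_mdarts r & face_mdarts r + face_ldarts r <= 3.
Proof.
pose small r := (0 < face_mdarts r) && (face_mdarts r + face_ldarts r <= 3).
have [r /andP[]| no_small] := pickP small; first by exists r.
have free_part : \sum_(r in froots phi | face_mdarts r == 0) 4 <= 4.
  by rewrite sum_nat_const; apply: (leq_mul card_matching_free_faces (leqnn 4)).
have rest_part :
    \sum_(r in froots phi | face_mdarts r != 0) 4 <= 2 * fcard sigma D.
  rewrite -sum_face_darts [X in _ <= X](bigID (fun r => face_mdarts r == 0)) /=.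
  apply: leq_trans (leq_addl _ _); apply: leq_sum => r /andP[_ m_neq0].
  by move: (no_small r); rewrite /small lt0n m_neq0 /= => /negbT; rewrite -ltnNge.
have faces_le : 4 * fcard phi D <= 4 + 2 * fcard sigma D.
  rewrite fcardT mulnC -sum_nat_const (bigID (fun r => face_mdarts r == 0)) /=.
  exact: leq_add free_part rest_part.
have := euler_trivalent; lia.
Qed.

End TrivalentMatchedMap.

Lemma mem_small_pairs (a b : nat) : 0 < a -> a + b <= 3 ->
  (a, b) \in [:: (1, 0); (1, 1); (1, 2); (2, 0); (2, 1); (3, 0)]%N.
Proof. by case: a => [|[|[|[|a]]]] //; case: b => [|[|[|b]]]. Qed.

Theorem lemma2p7 (D : finType) (alpha sigma : D -> D) (M : pred D) :
  is_comb_map alpha sigma ->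
  map_connected alpha sigma ->
  genus0 alpha sigma ->
  trivalent sigma ->
  perfect_matching alpha sigma M ->
  complement_single_cycle alpha sigma M ->
  exists x : D,
    (mF alpha sigma M x, lF alpha sigma M x)
      \in [:: (1, 0); (1, 1); (1, 2); (2, 0); (2, 1); (3, 0)]%N.
Proof.
(* connectedness of the map already follows from the cycle hypothesis *)
move=> [alphaK alpha_fpf sigma_inj] _ genus order3 [M_alpha M_vertex] cycle.
have [r m_gt0 ml_le3] := small_face_exists alphaK sigma_inj order3 M_alpha
  M_vertex cycle alpha_fpf genus.
exists r; apply: mem_small_pairs; first exact: mF_gt0.
by apply: leq_trans ml_le3; apply: leq_add; [apply: mF_le | apply: lF_le].
Qed.
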